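(* Let $G$ be the 3-dimensional Gauss map on the tetrahedron $S$. For every point $(x,y,z)\in S$ with $x,y,z\in\mathbb{Q}$ there exists $k\ge0$ with $G^k(x,y,z)=(0,0,0)$.
   Context: Let $S = \{(x,y,z)\in\mathbb{R}^3 : 0\le z\le y\le x\le 1\}$. For integers $n\ge1$ define the pieces $\mathbb{A}_n = \{\frac1{n+1} < x \le \frac1n,\ 0\le z\le y\le 1-nx\}$, $\mathbb{B}_n = \{0\le z\le 1-nx < y \le x\}$, $\mathbb{C}_n = \{1-nx < z \le y \le x \le \frac1n\}$ (all subsets of $S$); together with $\{(0,0,0)\}$ they partition $S$. The 3-dimensional Gauss map $G:S\to S$ is $G(0,0,0)=(0,0,0)$, $G(x,y,z)=\left(\frac1x-n,\frac yx,\frac zx\right)$ on $\mathbb{A}_n$, $G(x,y,z)=\left(\frac{1-y}{x}-n+1,\frac{x-y+z}{x},\frac{x-y}{x}\right)$ on $\mathbb{B}_n$, $G(x,y,z)=\left(\frac{1-z}{x}-n+1,\frac{x-z}{x},\frac{y-z}{x}\right)$ on $\mathbb{C}_n$. *)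

From HB Require Import structures.
From mathcomp Require Import all_boot all_order all_algebra.
Set Implicit Arguments. Unset Strict Implicit. Unset Printing Implicit Defensive.
Import Order.TTheory GRing.Theory Num.Theory.
Local Open Scope ring_scope.

Section Gauss.
Variable R : archiRealFieldType.

Definition pt := (R * R * R)%type.

Definition inS (p : pt) : bool :=
  let: (x, y, z) := p in [&& 0 <= z, z <= y, y <= x & x <= 1].

Definition inA (n : nat) (p : pt) : bool :=
  let: (x, y, z) := p in
  [&& inS p, (n.+1%:R)^-1 < x, x <= (n%:R)^-1, 0 <= z, z <= y & y <= 1 - n%:R * x].
Definition inB (n : nat) (p : pt) : bool :=
  let: (x, y, z) := p in
  [&& inS p, 0 <= z, z <= 1 - n%:R * x, 1 - n%:R * x < y & y <= x].
Definition inC (n : nat) (p : pt) : bool :=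
  let: (x, y, z) := p in
  [&& inS p, 1 - n%:R * x < z, z <= y, y <= x & x <= (n%:R)^-1].

(* For (x,y,z) in S \ {0}, all three pieces containing the point have index
   n = floor(1/x) (since each forces 1/(n+1) < x <= 1/n); we compute n this
   way and then test the pieces. Values outside S are irrelevant junk. *)
Definition gidx (p : pt) : nat := let: (x, _, _) := p in Num.truncn (x^-1).

Definition G (p : pt) : pt :=
  let: (x, y, z) := p in
  let n := gidx p in
  if p == (0, 0, 0) then (0, 0, 0)
  else if inA n p then (x^-1 - n%:R, y / x, z / x)
  else if inB n p then ((1 - y) / x - n%:R + 1, (x - y + z) / x, (x - y) / x)
  else ((1 - z) / x - n%:R + 1, (x - z) / x, (y - z) / x).

End Gauss.

From HB Require Import structures.
From mathcomp Require Import all_boot all_order all_algebra.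
From mathcomp Require Import lra.
Set Implicit Arguments.
Unset Strict Implicit.
Unset Printing Implicit Defensive.

Import Order.TTheory GRing.Theory Num.Theory.
Local Open Scope ring_scope.

(* If every coordinate of a point of S \ {0} is a multiple of 1/c, then every
   coordinate of its image is a multiple of 1/(c x): each branch of G has the
   form (a/x, b/x, d/x) with a, b, d integer combinations of 1, x, y, z.  The
   image also lies in S with first coordinate < 1, so from the second step on
   the common denominator c x is a positive integer strictly smaller than c,
   and the orbit must reach the fixed point 0. *)

Section GaussDescent.
Variable R : archiRealFieldType.

Definition scaled_int (c : R) (p : pt R) : bool :=
  let: (x, y, z) := p in
  [&& c * x \is a Num.int, c * y \is a Num.int & c * z \is a Num.int].

Lemma truncn_inv_bounds (x : R) : 0 < x -> x <= 1 ->
  let n := Num.truncn x^-1 in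
  [/\ (0 < n)%N, n%:R * x <= 1 & 1 < n.+1%:R * x].
Proof.
move=> x_gt0 x_le1 /=.
have inv_ge1 : 1 <= x^-1 by rewrite invr_ge1 // unitfE gt_eqF.
have /andP[lo hi] := truncn_itv (le_trans ler01 inv_ge1).
split; first by rewrite truncn_gt0.
- by rewrite -ler_pdivlMr // div1r.
- by rewrite -ltr_pdivrMr // div1r.
Qed.

Lemma inS_neq0_gt0 (x y z : R) : inS (x, y, z) -> (x, y, z) != (0, 0, 0) ->
  0 < x.
Proof.
move=> /and4P[z_ge0 zy yx _] p_neq0.
rewrite lt_neqAle (le_trans z_ge0 (le_trans zy yx)) andbT.
apply: contra p_neq0 => /eqP x0; rewrite -x0 in yx.
have y0 : y = 0 by apply/le_anti; rewrite yx (le_trans z_ge0 zy).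
have z0 : z = 0 by apply/le_anti; rewrite -{1}y0 zy z_ge0.
by rewrite -x0 y0 z0.
Qed.

Lemma inA_truncn (x y z : R) : inS (x, y, z) -> 0 < x ->
  let n := Num.truncn x^-1 in inA n (x, y, z) = (y <= 1 - n%:R * x).
Proof.
move=> /and4P[z_ge0 zy yx x_le1] x_gt0 /=.
have [n_gt0 nx_le1 Snx_gt1] := truncn_inv_bounds x_gt0 x_le1.
set n := Num.truncn x^-1 in n_gt0 nx_le1 Snx_gt1 *.
rewrite /inA z_ge0 zy yx x_le1 /= -[n.+1%:R^-1]div1r -[n%:R^-1]div1r.
by rewrite ltr_pdivrMr ?ler_pdivlMr ?ltr0n // ![x * _]mulrC Snx_gt1 nx_le1.
Qed.

Lemma inB_lt (n : nat) (x y z : R) : inS (x, y, z) -> 1 - n%:R * x < y ->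
  inB n (x, y, z) = (z <= 1 - n%:R * x).
Proof.
move=> pS lt_y; have /and4P[z_ge0 _ yx _] := pS.
by rewrite /inB pS z_ge0 lt_y yx !andbT.
Qed.

Lemma inS_scaled_int_divr (c x a b d : R) :
  0 <= d -> d <= b -> b <= a -> a < x ->
  c * a \is a Num.int -> c * b \is a Num.int -> c * d \is a Num.int ->
  [&& inS (a / x, b / x, d / x), a / x < 1
    & scaled_int (c * x) (a / x, b / x, d / x)].
Proof.
move=> d_ge0 db ba ax ia ib id.
have x_gt0 : 0 < x.
  by apply: le_lt_trans ax; rewrite (le_trans d_ge0) ?(le_trans db).
have x_inv_gt0 : 0 < x^-1 by rewrite invr_gt0.
have cancel_x v : c * x * (v / x) = c * v.
  by rewrite mulrA (mulrAC c x v) mulfK ?lt0r_neq0.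
rewrite /inS /scaled_int !cancel_x ia ib id divr_ge0 ?(ltW x_gt0) //=.
rewrite !ler_pM2r // db ba.
by rewrite ler_pdivrMr // ltr_pdivrMr // mul1r ax (ltW ax).
Qed.

Lemma G_step (c x y z : R) : inS (x, y, z) -> (x, y, z) != (0, 0, 0) ->
  c \is a Num.int -> scaled_int c (x, y, z) ->
  [&& inS (G (x, y, z)), (G (x, y, z)).1.1 < 1
    & scaled_int (c * x) (G (x, y, z))].
Proof.
move=> pS p_neq0 ci /and3P[ix iy iz].
have x_gt0 := inS_neq0_gt0 pS p_neq0.
have /and4P[z_ge0 zy yx x_le1] := pS.
have [_ nx_le1 Snx_gt1] := truncn_inv_bounds x_gt0 x_le1.
set n := Num.truncn x^-1 in nx_le1 Snx_gt1.
have ci1 : c * 1 \is a Num.int by rewrite mulr1.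
have cnxi : c * (n%:R * x) \is a Num.int by rewrite mulrCA rpredM ?natr_int.
have split_x v : v / x - n%:R + 1 = (v - n%:R * x + x) / x.
  by rewrite mulrDl mulrBl mulfK ?divff ?gt_eqF.
rewrite /G /gidx -/n (negbTE p_neq0) inA_truncn // -/n.
have [y_le | lt_y] := leP y (1 - n%:R * x).
  have -> : x^-1 - n%:R = (1 - n%:R * x) / x.
    by rewrite mulrBl mulfK ?lt0r_neq0 // div1r.
  apply: inS_scaled_int_divr => //; first by lra.
  by rewrite !(mulrDr, mulrN) !(rpredD, rpredN).
rewrite inB_lt //; case: (leP z (1 - n%:R * x)) => z_cmp;
  rewrite split_x; apply: inS_scaled_int_divr; try lra;
  by rewrite !(mulrDr, mulrN) !(rpredD, rpredN).
Qed.

Lemma G_step_nat (m : nat) (x y z : R) : (0 < m)%N -> inS (x, y, z) ->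
  (x, y, z) != (0, 0, 0) -> scaled_int m%:R (x, y, z) ->
  exists m' : nat, [/\ (0 < m')%N, m'%:R = m%:R * x, inS (G (x, y, z)),
    (G (x, y, z)).1.1 < 1 & scaled_int m'%:R (G (x, y, z))].
Proof.
move=> m_gt0 pS p_neq0 p_int.
have x_gt0 := inS_neq0_gt0 pS p_neq0.
have /and3P[GS Gx_lt1 G_int] := G_step pS p_neq0 (natr_int R m) p_int.
have /and3P[mxi _ _] := p_int.
have m'E : (Num.truncn (m%:R * x))%:R = m%:R * x.
  by rewrite truncnK // natrEint mxi mulr_ge0 ?ler0n ?ltW.
exists (Num.truncn (m%:R * x)); rewrite m'E; split => //.
by rewrite -(ltr0n R) m'E mulr_gt0 ?ltr0n.
Qed.

Lemma G_iter_eq0_lt1 (m : nat) (x y z : R) : (0 < m)%N -> inS (x, y, z) ->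
  x < 1 -> scaled_int m%:R (x, y, z) ->
  exists k : nat, iter k (@G R) (x, y, z) = (0, 0, 0).
Proof.
elim/ltn_ind: m x y z => m IH x y z m_gt0 pS x_lt1 p_int.
have [->|p_neq0] := eqVneq (x, y, z) (0, 0, 0); first by exists 0%N.
have [m' [m'_gt0 m'E]] := G_step_nat m_gt0 pS p_neq0 p_int.
have m'_lt : (m' < m)%N.
  by rewrite -(ltr_nat R) m'E -{2}[m%:R]mulr1 ltr_pM2l ?ltr0n.
case GE: (G (x, y, z)) => [[x' y'] z'] GS Gx_lt1 G_int.
have [k Gk] := IH m' m'_lt x' y' z' m'_gt0 GS Gx_lt1 G_int.
by exists k.+1; rewrite iterSr GE.
Qed.

Theorem G_iter_eq0 (m : nat) (x y z : R) : (0 < m)%N -> inS (x, y, z) ->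
  scaled_int m%:R (x, y, z) ->
  exists k : nat, iter k (@G R) (x, y, z) = (0, 0, 0).
Proof.
move=> m_gt0 pS p_int.
have [->|p_neq0] := eqVneq (x, y, z) (0, 0, 0); first by exists 0%N.
have [m' [m'_gt0 _]] := G_step_nat m_gt0 pS p_neq0 p_int.
case GE: (G (x, y, z)) => [[x' y'] z'] GS Gx_lt1 G_int.
have [k Gk] := G_iter_eq0_lt1 m'_gt0 GS Gx_lt1 G_int.
by exists k.+1; rewrite iterSr GE.
Qed.

End GaussDescent.

Lemma rat_scaled_int (q : rat) : exists d : nat, d.+1%:R * q \is a Num.int.
Proof.
have [d dE] := denqP q; exists d.
by rewrite -[d.+1%:R]/(d.+1%:~R) -dE mulrC -numqE intr_int.
Qed.

Lemma mulr_intl (R : archiNumDomainType) (e c v : R) :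
  e \is a Num.int -> c * v \is a Num.int -> e * c * v \is a Num.int.
Proof. by move=> ei cvi; rewrite -mulrA rpredM. Qed.

Lemma mulr_intr (R : archiNumDomainType) (c e v : R) :
  e \is a Num.int -> c * v \is a Num.int -> c * e * v \is a Num.int.
Proof. by move=> ei cvi; rewrite mulrAC rpredM. Qed.

Theorem mainTheorem13 (x y z : rat) :
  inS (x, y, z) -> exists k : nat, iter k (@G rat) (x, y, z) = (0, 0, 0).
Proof.
move=> pS.
have [a ai] := rat_scaled_int x.
have [b bi] := rat_scaled_int y.
have [d di] := rat_scaled_int z.
apply: (@G_iter_eq0 _ (a.+1 * b.+1 * d.+1)) => //.
have nati n : n%:R \is a @Num.int rat := natr_int rat n.
rewrite /scaled_int !natrM; apply/and3P; split.
- exact: mulr_intr (nati _) (mulr_intr (nati _) ai).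
- exact: mulr_intr (nati _) (mulr_intl (nati _) bi).
- exact: mulr_intl (rpredM (nati _) (nati _)) di.
Qed.
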